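(* For some $n\geq 1$ there is a function $F:\mathcal{K}_n\times\mathcal{K}_n\to\mathbb{R}$ which satisfies (A1), (A2) and (A3) but does not satisfy the Cauchy–Schwarz axiom (A4); i.e. there exist $A,B\in\mathcal{K}_n$ with $F(A,B)^2> F(A,A)F(B,B)$ or with equality without $A=\lambda B$ for some $\lambda\ge 0$.
   Context: A convex body is a closed, bounded, non-empty convex subset of $\mathbb{R}^n$; $\mathcal{K}_n$ is the set of convex bodies in $\mathbb{R}^n$, with Minkowski addition and nonnegative scaling. The axioms for $F:\mathcal{K}_n\times\mathcal{K}_n\to\mathbb{R}$ are: (A1) $F(A,B)=F(B,A)$ for all $A,B$; (A2) $F(\alpha A+\beta B,C)=\alpha F(A,C)+\beta F(B,C)$ for all $\alpha,\beta\geq 0$ and $A,B,C\in\mathcal{K}_n$; (A3) $F(A,A)>0$ whenever $A\neq\{0\}$; (A4) $F(A,B)^2\leq F(A,A)F(B,B)$ for all $A,B$, with equality if and only if $A=\lambda B$ for some $\lambda\geq0$. *)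

From HB Require Import structures.
From mathcomp Require Import all_boot all_order all_algebra.
From mathcomp Require Import all_classical all_reals.
From mathcomp Require Import topology normedtype Rstruct Rstruct_topology.
Set Implicit Arguments. Unset Strict Implicit. Unset Printing Implicit Defensive.
Import Order.TTheory GRing.Theory Num.Theory.
Import numFieldNormedType.Exports.
Local Open Scope classical_set_scope.
Local Open Scope ring_scope.

(* Points of R^n are row vectors 'rV[R]_n, with the usual (sup-norm) topology;
   closedness and boundedness do not depend on the choice of norm. *)
Notation R := Rdefinitions.R.
Definition pt (n : nat) := 'rV[R]_n.

Definition convex_set (n : nat) (A : set (pt n)) : Prop :=
  forall x y (t : R), A x -> A y -> 0 <= t <= 1 -> A (t *: x + (1 - t) *: y).

Definition convex_body (n : nat) (A : set (pt n)) : Prop :=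
  [/\ closed A, bounded_set A, A !=set0 & convex_set A].

Definition mink_add (n : nat) (A B : set (pt n)) : set (pt n) :=
  [set x + y | x in A & y in B].
Definition mink_scale (n : nat) (a : R) (A : set (pt n)) : set (pt n) :=
  [set a *: x | x in A].

(* F is given as a function on all subsets; only its values on convex bodies
   matter (the axioms only quantify over convex bodies). *)
Definition axA1 (n : nat) (F : set (pt n) -> set (pt n) -> R) : Prop :=
  forall A B, convex_body A -> convex_body B -> F A B = F B A.

Definition axA2 (n : nat) (F : set (pt n) -> set (pt n) -> R) : Prop :=
  forall (a b : R) A B C, 0 <= a -> 0 <= b ->
    convex_body A -> convex_body B -> convex_body C ->
    F (mink_add (mink_scale a A) (mink_scale b B)) C = a * F A C + b * F B C.

Definition axA3 (n : nat) (F : set (pt n) -> set (pt n) -> R) : Prop :=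
  forall A, convex_body A -> A <> [set 0] -> 0 < F A A.

Definition axA4 (n : nat) (F : set (pt n) -> set (pt n) -> R) : Prop :=
  forall A B, convex_body A -> convex_body B ->
    F A B ^+ 2 <= F A A * F B B /\
    (F A B ^+ 2 = F A A * F B B <->
       exists lam : R, 0 <= lam /\ A = mink_scale lam B).

(* A one-dimensional body is the interval [-h_A(-1), h_A(1)], and
   F(A, B) = h_A(1) h_B(1) + h_A(-1) h_B(-1) is the Euclidean inner product of
   the vectors (h_A(1), h_A(-1)).  Support functions are Minkowski-linear, so F
   satisfies (A1)-(A3).  But the equality case of Cauchy-Schwarz only forces
   these vectors to be proportional with a factor of either sign: for A = {1}
   and B = {-1} they are (1, -1) and (-1, 1), so equality holds although A is
   not a nonnegative multiple of B. *)
From HB Require Import structures.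
From mathcomp Require Import all_boot all_order all_algebra.
From mathcomp Require Import all_classical all_reals.
From mathcomp Require Import topology normedtype Rstruct Rstruct_topology.
From mathcomp Require Import ring lra.
Import Order.TTheory GRing.Theory Num.Theory.
Import numFieldNormedType.Exports.
Set Implicit Arguments. Unset Strict Implicit.
Local Open Scope classical_set_scope.
Local Open Scope ring_scope.

Section sup_scale.
Context {K : realType}.

Lemma has_sup_scale (E : set K) (a : K) : 0 <= a -> has_sup E ->
  has_sup [set a * x | x in E].
Proof.
move=> a0 [[e Ee] [M HM]]; split; first by exists (a * e), e.
by exists (a * M) => _ [x Ex <-]; rewrite ler_wpM2l // HM.
Qed.

Lemma sup_scale (E : set K) (a : K) : 0 <= a -> has_sup E ->
  sup [set a * x | x in E] = a * sup E.
Proof.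
move=> a0 supE; have [[e Ee] ubE] := supE.
have [->|a_neq0] := eqVneq a 0.
  have -> : [set 0 * x | x in E] = [set 0].
    apply/seteqP; split=> [_ [x _ <-]|_ ->] /=; first by rewrite mul0r.
    by exists e; rewrite ?mul0r.
  by rewrite sup1 mul0r.
have a_gt0 : 0 < a by rewrite lt_def a_neq0.
apply: le_anti; apply/andP; split.
  apply: ge_sup; first by exists (a * e), e.
  by move=> _ [x Ex <-]; rewrite ler_wpM2l // ub_le_sup.
rewrite -ler_pdivlMl //; apply: ge_sup; first by exists e.
move=> x Ex; rewrite ler_pdivlMl //; apply: ub_le_sup; last by exists x.
by have [] := has_sup_scale a0 supE.
Qed.

End sup_scale.

Lemma convex_body_set1 (n : nat) (e : pt n) : convex_body [set e].
Proof.
split.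
- exact: compact_closed (@norm_hausdorff _ _) (@compact_set1 _ e).
- by have := @compact_bounded _ _ _ (@compact_set1 _ e).
- by exists e.
- by move=> x y t -> -> _; rewrite -scalerDl subrKC scale1r.
Qed.

Definition support (n : nat) (phi : pt n -> R) (A : set (pt n)) : R :=
  sup (phi @` A).

Lemma support_set1 (n : nat) (phi : pt n -> R) (e : pt n) :
  support phi [set e] = phi e.
Proof. by rewrite /support image_set1 sup1. Qed.

Section support_functional.
Variables (n : nat) (phi : pt n -> R).
Hypothesis phi_linear :
  forall a b x y, phi (a *: x + b *: y) = a * phi x + b * phi y.
Hypothesis phi_le_norm : forall x, `|phi x| <= `|x|.

Lemma has_sup_image_body (A : set (pt n)) : convex_body A -> has_sup (phi @` A).
Proof.
move=> [_ [M [_ AM]] [e Ae] _]; split; first by exists (phi e), e.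
exists (M + 1) => _ [x Ax <-].
have /= x_le := AM (M + 1) (ltr_pwDr ltr01 (lexx M)) x Ax.
exact: le_trans (ler_norm _) (le_trans (phi_le_norm x) x_le).
Qed.

Lemma support_ge (A : set (pt n)) x :
  convex_body A -> A x -> phi x <= support phi A.
Proof.
move=> /has_sup_image_body [_ ubA] Ax.
by apply: ub_le_sup => //; exists x.
Qed.

Lemma support_mink (a b : R) (A B : set (pt n)) :
  0 <= a -> 0 <= b -> convex_body A -> convex_body B ->
  support phi (mink_add (mink_scale a A) (mink_scale b B)) =
  a * support phi A + b * support phi B.
Proof.
move=> a0 b0 /has_sup_image_body supA /has_sup_image_body supB.
rewrite /support -(sup_scale a0 supA) -(sup_scale b0 supB).
rewrite -sup_sumE; [|exact: has_sup_scale..].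
congr sup; apply/seteqP; split.
  move=> _ [_ [_ [x Ax <-] [_ [y By <-] <-]] <-].
  exists (a * phi x); first by exists (phi x) => //; exists x.
  by exists (b * phi y); [exists (phi y) => //; exists y | rewrite phi_linear].
move=> _ [_ [_ [x Ax <-] <-] [_ [_ [y By <-] <-] <-]].
exists (a *: x + b *: y); last by rewrite phi_linear.
by exists (a *: x); [exists x | exists (b *: y); [exists y |]].
Qed.

End support_functional.

Section coordinate.
Variables (n : nat) (i : 'I_n).

Definition coord (x : pt n) : R := x ord0 i.

Lemma coord_linear a b x y : coord (a *: x + b *: y) = a * coord x + b * coord y.
Proof. by rewrite /coord !mxE. Qed.

Lemma coordN_linear a b x y :
  - coord (a *: x + b *: y) = a * - coord x + b * - coord y.
Proof. by rewrite coord_linear opprD -!mulrN. Qed.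

Lemma coord_le_norm x : `|coord x| <= `|x|.
Proof.
have -> : `|x| = mx_norm x by [].
by rewrite mx_normrE (bigD1 (ord0, i)) //= le_max lexx.
Qed.

Lemma coordN_le_norm x : `|- coord x| <= `|x|.
Proof. by rewrite normrN coord_le_norm. Qed.

End coordinate.

Definition hplus (A : set (pt 1)) : R := support (coord ord0) A.
Definition hminus (A : set (pt 1)) : R := support (fun x => - coord ord0 x) A.

Definition counterF (A B : set (pt 1)) : R :=
  hplus A * hplus B + hminus A * hminus B.

Lemma counterF_sym : axA1 counterF.
Proof. by move=> A B _ _; rewrite /counterF mulrC [hminus A * _]mulrC. Qed.

Lemma counterF_mink_linear : axA2 counterF.
Proof.
move=> a b A B C a0 b0 bodyA bodyB _.
rewrite /counterF /hplus /hminus.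
rewrite (support_mink (@coord_linear _ _) (@coord_le_norm _ _)) //.
rewrite (support_mink (@coordN_linear _ _) (@coordN_le_norm _ _)) //.
ring.
Qed.

Lemma supports_eq0 (A : set (pt 1)) :
  convex_body A -> hplus A = 0 -> hminus A = 0 -> A = [set 0].
Proof.
move=> bodyA hp0 hm0.
have A_sub0 x : A x -> x = 0.
  move=> Ax; have := support_ge (@coord_le_norm _ ord0) bodyA Ax.
  have := support_ge (@coordN_le_norm _ ord0) bodyA Ax.
  move: hp0 hm0; rewrite /hplus /hminus /coord => -> -> x_ge0 x_le0.
  by apply/rowP => j; rewrite (ord1 j) !mxE; lra.
have [_ _ [e Ae] _] := bodyA.
apply/seteqP; split=> x /=; first exact: A_sub0.
by move=> ->; rewrite -(A_sub0 e Ae).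
Qed.

Lemma counterF_pos : axA3 counterF.
Proof.
move=> A bodyA A_neq0; rewrite /counterF -!expr2.
have [hp0|hp_neq0] := eqVneq (hplus A) 0.
  have [hm0|hm_neq0] := eqVneq (hminus A) 0.
    by case: A_neq0; exact: supports_eq0.
  by rewrite hp0 expr0n add0r exprn_even_gt0.
by rewrite ltr_pwDl ?exprn_even_gt0 ?sqr_ge0.
Qed.

Lemma counterF_equality_antipodal (e : pt 1) : e != 0 ->
  counterF [set e] [set - e] ^+ 2 =
    counterF [set e] [set e] * counterF [set - e] [set - e] /\
  ~ (exists lam : R, 0 <= lam /\ [set e] = mink_scale lam [set - e]).
Proof.
rewrite /counterF /hplus /hminus !support_set1 /coord !mxE.
move=> e_neq0; split; first lra.
have e0_neq0 : e ord0 ord0 != 0.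
  by apply: contra e_neq0 => /eqP e0; apply/eqP/rowP => j; rewrite (ord1 j) mxE.
case=> lam [lam_ge0 /seteqP [e_sub _]].
have [_ -> /(congr1 (fun x : pt 1 => x ord0 ord0))] := e_sub e erefl.
rewrite !mxE => e0_eq.
have : (1 + lam) * e ord0 ord0 != 0.
  by rewrite mulf_neq0 // gt_eqF // ltr_pwDl.
by rewrite mulrDl mul1r -[X in X + _]e0_eq mulrN addNr eqxx.
Qed.

Theorem proposition1 :
  exists (n : nat) (F : set (pt n) -> set (pt n) -> R),
    (1 <= n)%N /\ axA1 F /\ axA2 F /\ axA3 F /\
    exists A B : set (pt n), convex_body A /\ convex_body B /\
      (F A A * F B B < F A B ^+ 2 \/
       (F A B ^+ 2 = F A A * F B B /\
        ~ (exists lam : R, 0 <= lam /\ A = mink_scale lam B))).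
Proof.
pose e : pt 1 := const_mx 1.
have e_neq0 : e != 0 by apply/eqP => /rowP /(_ ord0); rewrite !mxE; lra.
exists 1%N, counterF; split=> //.
split; first exact: counterF_sym.
split; first exact: counterF_mink_linear.
split; first exact: counterF_pos.
exists [set e], [set - e].
split; first exact: convex_body_set1.
split; first exact: convex_body_set1.
by right; exact: counterF_equality_antipodal.
Qed.
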